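(* Let $n\ge2$ be an integer that is not a perfect square, and let $a,b$ be positive rational numbers with $a^2-nb^2=1$. Put $u=a+b\sqrt n$ and for $k\ge1$ write $u^k=a_k+b_k\sqrt n$ with $a_k,b_k\in\mathbb Q$. Then $$\mathcal L\left(\frac1{u^2}\right)=\sum_{k=2}^{\infty}\mathcal L\left(\frac{1}{(b_k/b)^2}\right).$$ Moreover, if $a,b\in\mathbb Z$ then $b_k/b\in\mathbb Z$ for all $k\ge1$.
   Context: $\mathcal L$ is the Rogers dilogarithm: for real $z\le1$, $\mathcal L(z)=\mathrm{Li}_2(z)+\tfrac12\log|z|\log(1-z)$, where $\mathrm{Li}_2(z)=\sum_{m\ge1}z^m/m^2$. *)

From Stdlib Require Import Reals Lra QArith Qreals ClassicalEpsilon.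
Open Scope R_scope.

(* Dilogarithm Li_2(z) = sum_{m>=1} z^m/m^2, defined as the (chosen) sum of
   the series; for |z| <= 1 the series converges, so this is its value. *)
Definition Li2 (z : R) : R :=
  epsilon (inhabits 0)
    (fun l => infinite_sum (fun m => z ^ (S m) / (INR (S m)) ^ 2) l).

Definition RogersL (z : R) : R :=
  Li2 z + / 2 * ln (Rabs z) * ln (1 - z).

From Stdlib Require Import Reals QArith Qreals ZArith Lra Lia ClassicalEpsilon.
From Coquelicot Require Import Coquelicot.
Open Scope R_scope.

(** With [v = a - b sqrt n = 1/u] in (0,1) and [q = v^2], one has
    [b_k / b = (v^-k - v^k) / (v^-1 - v)], hence [1 / (b_(m+1) / b)^2 = q^m (1-q)^2 / (1-q^(m+1))^2].
    Abel's five-term relation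
      [L x + L y = L (x y) + L (x (1-y) / (1 - x y)) + L (y (1-x) / (1 - x y))],
    applied to [x_m = q^m (1-q) / (1-q^(m+1))] and [y_m = (1-q) / (1-q^(m+1))], turns
    [L x_m + L y_m] into the [m]-th term plus [L x_(m+1) + L y_(m+1)].  The series therefore
    telescopes from [L x_1 + L y_1 = L q + L (1-q)] (reflection, as [x_1 + y_1 = 1]) down to
    [L 0 + L (1-q)], leaving [L q = L (1/u^2)].  Both functional equations are proved by showing
    that the derivative in one variable vanishes on (0,1), the constant being read off as that
    variable tends to 0, where [L t -> 0].
    For integrality, the pair [(a_k, b_k / b)] obeys a linear recurrence with coefficients
    [a] and [n b^2]; it is determined by [(a + b sqrt n)^k] because [sqrt n] is irrational. *)

Lemma derive_0_const (f : R -> R) a b :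
  (forall x, a < x < b -> is_derive f x 0) ->
  forall x y, a < x < b -> a < y < b -> f x = f y.
Proof.
  intros Hd x y Hx Hy.
  assert (Hin : forall z, Rmin x y <= z <= Rmax x y -> a < z < b).
  { intros z Hz. pose proof (Rmin_glb_lt x y a); pose proof (Rmax_lub_lt x y b).
    unfold Rgt in *; lra. }
  destruct (MVT_gen f x y (fun _ => 0)) as [c [_ Hc]].
  - intros z Hz; apply Hd, Hin; lra.
  - intros z Hz; apply derivable_continuous_pt; exists 0.
    apply is_derive_Reals, Hd, Hin, Hz.
  - lra.
Qed.

Lemma is_lim_seq_ex_derive_comp (f : R -> R) u l :
  ex_derive f l -> is_lim_seq u l -> is_lim_seq (fun n => f (u n)) (f l).
Proof.
  intros [df Hf]; apply is_lim_seq_continuous, derivable_continuous_pt.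
  exists df; apply is_derive_Reals, Hf.
Qed.

Lemma ln_le_sub_1 t : 0 < t -> ln t <= t - 1.
Proof.
  intros Ht; pose proof (exp_ineq1_le (ln t)) as H.
  rewrite exp_ln in H by exact Ht; lra.
Qed.

Lemma ln_div x y : 0 < x -> 0 < y -> ln (x / y) = ln x - ln y.
Proof.
  intros Hx Hy; unfold Rdiv.
  rewrite ln_mult, ln_Rinv by (try apply Rinv_0_lt_compat; assumption); ring.
Qed.

Lemma Rdiv_in_01 a b : 0 < a -> a < b -> 0 < a / b < 1.
Proof.
  intros Ha Hab; split; [apply Rdiv_lt_0_compat; lra|].
  apply Rmult_lt_reg_r with b; [lra|].
  unfold Rdiv; rewrite Rmult_assoc, Rinv_l; lra.
Qed.

Lemma is_lim_seq_half_pow : is_lim_seq (fun n => (/ 2) ^ S n) 0.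
Proof.
  apply (is_lim_seq_incr_1 (fun n => (/ 2) ^ n)), is_lim_seq_geom.
  rewrite Rabs_right; lra.
Qed.

(** * The dilogarithm as a power series *)

Definition dilog_coef (m : nat) : R := / INR (S m) ^ 2.
Definition log_coef (m : nat) : R := / INR (S m).
Definition dilog (z : R) : R := PSeries (PS_incr_1 dilog_coef) z.

Lemma CV_radius_const_1 : CV_radius (fun _ => 1) = 1.
Proof.
  replace (Finite 1) with (Finite (/ 1)) by (f_equal; field).
  apply CV_radius_finite_DAlembert; [intros; lra | lra |].
  eapply is_lim_seq_ext; [|apply is_lim_seq_const].
  intros n; rewrite Rabs_right; [field | lra].
Qed.

Lemma PS_derive_incr_log_coef n : PS_derive (PS_incr_1 log_coef) n = 1.
Proof.
  unfold PS_derive, log_coef; cbn [PS_incr_1].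
  field; apply not_0_INR; lia.
Qed.

Lemma PS_derive_incr_dilog_coef n : PS_derive (PS_incr_1 dilog_coef) n = log_coef n.
Proof.
  unfold PS_derive, dilog_coef, log_coef; cbn [PS_incr_1].
  field; apply not_0_INR; lia.
Qed.

Lemma CV_radius_log_coef : CV_radius log_coef = 1.
Proof.
  rewrite <- CV_radius_incr_1, <- CV_radius_derive, <- CV_radius_const_1.
  exact (CV_radius_ext _ _ PS_derive_incr_log_coef).
Qed.

Lemma CV_radius_dilog_coef : CV_radius dilog_coef = 1.
Proof.
  rewrite <- CV_radius_incr_1, <- CV_radius_derive, <- CV_radius_log_coef.
  exact (CV_radius_ext _ _ PS_derive_incr_dilog_coef).
Qed.

Lemma is_derive_dilog x : Rabs x < 1 -> is_derive dilog x (PSeries log_coef x).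
Proof.
  intros Hx; unfold dilog.
  rewrite <- (PSeries_ext _ _ x PS_derive_incr_dilog_coef).
  apply is_derive_PSeries.
  rewrite CV_radius_incr_1, CV_radius_dilog_coef; exact Hx.
Qed.

Lemma PSeries_const_1 x : Rabs x < 1 -> PSeries (fun _ => 1) x = / (1 - x).
Proof.
  intros Hx; apply is_pseries_unique, is_pseries_R.
  eapply is_series_ext; [|exact (is_series_geom x Hx)].
  intros n; symmetry; apply Rmult_1_l.
Qed.

Lemma PSeries_incr_log_coef x : Rabs x < 1 -> PSeries (PS_incr_1 log_coef) x = - ln (1 - x).
Proof.
  intros Hx; apply Rabs_lt_between in Hx.
  set (G t := PSeries (PS_incr_1 log_coef) t + ln (1 - t)).
  enough (G x = G 0) as E.
  { unfold G in E; rewrite PSeries_0, Rminus_0_r, ln_1 in E.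
    change (PS_incr_1 log_coef 0) with 0 in E. lra. }
  apply (derive_0_const G (-1) 1); try lra.
  intros t Ht.
  replace 0 with (PSeries (fun _ => 1) t + - / (1 - t)).
  2:{ rewrite PSeries_const_1 by (apply Rabs_def1; lra). ring. }
  apply (is_derive_plus (fun t => PSeries (PS_incr_1 log_coef) t) (fun t => ln (1 - t))).
  - rewrite <- (PSeries_ext _ _ t PS_derive_incr_log_coef).
    apply is_derive_PSeries.
    rewrite CV_radius_incr_1, CV_radius_log_coef; apply Rabs_def1; lra.
  - auto_derive; [lra | field; lra].
Qed.

Lemma Li2_dilog z : Rabs z < 1 -> Li2 z = dilog z.
Proof.
  intros Hz.
  assert (Hsum : infinite_sum (fun m => z ^ S m / INR (S m) ^ 2) (dilog z)).
  { apply is_series_Reals; unfold dilog; rewrite PSeries_incr_1.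
    assert (P : is_pseries dilog_coef z (PSeries dilog_coef z)).
    { apply PSeries_correct, CV_radius_inside.
      rewrite CV_radius_dilog_coef; exact Hz. }
    apply is_pseries_R, (is_series_scal_l z) in P.
    eapply is_series_ext; [|exact P].
    intros n; change (z * (dilog_coef n * z ^ n) = z ^ S n / INR (S n) ^ 2).
    unfold dilog_coef, Rdiv; change (z ^ S n) with (z * z ^ n); ring. }
  eapply uniqueness_sum; [|exact Hsum].
  exact (epsilon_spec (inhabits 0) _ (ex_intro _ _ Hsum)).
Qed.

(** * Derivative, boundary behaviour and functional equations of [RogersL] *)

Definition RogersL' (x : R) : R := - / 2 * (ln (1 - x) / x + ln x / (1 - x)).

Lemma RogersL_on_01 t : 0 < t < 1 -> RogersL t = dilog t + / 2 * ln t * ln (1 - t).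
Proof.
  intros Ht; unfold RogersL.
  rewrite Li2_dilog, Rabs_right by (try apply Rabs_def1; lra).
  reflexivity.
Qed.

Lemma is_derive_RogersL x : 0 < x < 1 -> is_derive RogersL x (RogersL' x).
Proof.
  intros Hx.
  assert (Hr : 0 < Rmin x (1 - x)) by (apply Rmin_glb_lt; lra).
  apply is_derive_ext_loc with (fun t => dilog t + / 2 * ln t * ln (1 - t)).
  { exists (mkposreal _ Hr); intros t Ht; symmetry; apply RogersL_on_01.
    change (Rabs (t - x) < Rmin x (1 - x)) in Ht; apply Rabs_lt_between in Ht.
    pose proof (Rmin_l x (1 - x)); pose proof (Rmin_r x (1 - x)); lra. }
  assert (Hlog : PSeries log_coef x = - ln (1 - x) / x).
  { rewrite <- PSeries_incr_log_coef by (apply Rabs_def1; lra).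
    rewrite PSeries_incr_1; field; lra. }
  replace (RogersL' x) with
    (PSeries log_coef x + / 2 * (/ x * ln (1 - x) + ln x * (-1 / (1 - x)))).
  2:{ rewrite Hlog; unfold RogersL'; field; lra. }
  apply (is_derive_plus dilog (fun t => / 2 * ln t * ln (1 - t))).
  - apply is_derive_dilog, Rabs_def1; lra.
  - auto_derive; [lra | unfold Rminus; field; lra].
Qed.

(* [-ln t <= 2 / sqrt t] and [-ln (1 - t) <= t / (1 - t)], both from [ln s <= s - 1]. *)
Lemma ln_mul_ln_1_sub_bound t : 0 < t < 1 -> 0 <= ln t * ln (1 - t) <= 2 * sqrt t / (1 - t).
Proof.
  intros Ht.
  assert (Hs : 0 < sqrt t) by (apply sqrt_lt_R0; lra).
  assert (Hst : sqrt t * sqrt t = t) by (apply sqrt_sqrt; lra).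
  assert (Hlnt : ln t = 2 * ln (sqrt t)).
  { rewrite <- Hst at 1; rewrite ln_mult by lra; ring. }
  pose proof (ln_le_sub_1 t ltac:(lra)).
  pose proof (ln_le_sub_1 (1 - t) ltac:(lra)).
  pose proof (ln_le_sub_1 (/ (1 - t)) ltac:(apply Rinv_0_lt_compat; lra)).
  pose proof (ln_le_sub_1 (/ sqrt t) ltac:(apply Rinv_0_lt_compat; lra)).
  rewrite ln_Rinv in * by lra.
  assert (Hlnt_bd : 0 <= - ln t <= 2 / sqrt t).
  { rewrite Hlnt; unfold Rdiv.
    assert (0 < / sqrt t) by (apply Rinv_0_lt_compat; lra). lra. }
  assert (Hln1t_bd : 0 <= - ln (1 - t) <= t / (1 - t)).
  { replace (t / (1 - t)) with (/ (1 - t) - 1) by (field; lra). lra. }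
  replace (ln t * ln (1 - t)) with (- ln t * - ln (1 - t)) by ring.
  split; [apply Rmult_le_pos; lra|].
  replace (2 * sqrt t / (1 - t)) with (2 / sqrt t * (t / (1 - t)))
    by (rewrite <- Hst at 2; field; lra).
  apply Rmult_le_compat; lra.
Qed.

Lemma is_lim_seq_RogersL_0 u : (forall n, 0 < u n < 1) -> is_lim_seq u 0 ->
  is_lim_seq (fun n => RogersL (u n)) 0.
Proof.
  intros Hu Hlim.
  apply is_lim_seq_ext with (fun n => dilog (u n) + / 2 * (ln (u n) * ln (1 - u n))).
  { intros n; rewrite RogersL_on_01 by exact (Hu n); ring. }
  replace 0 with (dilog 0 + / 2 * 0)
    by (unfold dilog; rewrite PSeries_0; change (PS_incr_1 dilog_coef 0) with 0; ring).
  apply is_lim_seq_plus'.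
  - apply (is_lim_seq_ex_derive_comp dilog u 0); [|exact Hlim].
    eexists; apply is_derive_dilog; rewrite Rabs_R0; lra.
  - apply is_lim_seq_mult'; [apply is_lim_seq_const|].
    apply is_lim_seq_le_le with (fun _ => 0) (fun n => 2 * sqrt (u n) / (1 - u n)).
    + intros n; apply ln_mul_ln_1_sub_bound, Hu.
    + apply is_lim_seq_const.
    + replace 0 with (2 * sqrt 0 / (1 - 0)) by (rewrite sqrt_0; field).
      apply is_lim_seq_div'; [apply is_lim_seq_mult'; [apply is_lim_seq_const|] | | lra].
      * apply (is_lim_seq_continuous sqrt); [apply continuity_pt_sqrt; lra | exact Hlim].
      * apply is_lim_seq_minus'; [apply is_lim_seq_const | exact Hlim].
Qed.

Lemma RogersL_reflection x y : 0 < x < 1 -> 0 < y < 1 ->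
  RogersL x + RogersL (1 - x) = RogersL y + RogersL (1 - y).
Proof.
  intros Hx Hy.
  apply (derive_0_const (fun t => RogersL t + RogersL (1 - t)) 0 1); try assumption.
  intros t Ht.
  replace 0 with (RogersL' t + scal (-1) (RogersL' (1 - t))).
  2:{ unfold RogersL'; replace (1 - (1 - t)) with t by ring.
      change (scal (-1) ?z) with (-1 * z); ring. }
  apply (is_derive_plus RogersL (fun t => RogersL (1 - t))).
  - apply is_derive_RogersL, Ht.
  - apply (is_derive_comp RogersL (fun t => 1 - t)).
    + apply is_derive_RogersL; lra.
    + auto_derive; [exact I | ring].
Qed.

Lemma RogersL'_five_term t y : 0 < t < 1 -> 0 < y < 1 ->
  RogersL' t - y * RogersL' (t * y)
  - (1 - y) / (1 - t * y) ^ 2 * RogersL' (t * (1 - y) / (1 - t * y))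
  + y * (1 - y) / (1 - t * y) ^ 2 * RogersL' (y * (1 - t) / (1 - t * y)) = 0.
Proof.
  intros Ht Hy.
  assert (Hd : 0 < 1 - t * y) by nra.
  unfold RogersL'.
  replace (1 - t * (1 - y) / (1 - t * y)) with ((1 - t) / (1 - t * y)) by (field; lra).
  replace (1 - y * (1 - t) / (1 - t * y)) with ((1 - y) / (1 - t * y)) by (field; lra).
  rewrite !ln_div, !ln_mult by (try apply Rmult_lt_0_compat; lra).
  field; repeat split; try lra; nra.
Qed.

Definition five_term_defect (y t : R) : R :=
  RogersL t + RogersL y - RogersL (t * y)
  - RogersL (t * (1 - y) / (1 - t * y)) - RogersL (y * (1 - t) / (1 - t * y)).

Lemma five_term_args_range t y : 0 < t < 1 -> 0 < y < 1 ->
  0 < t * y < 1 /\ 0 < t * (1 - y) / (1 - t * y) < 1 /\ 0 < y * (1 - t) / (1 - t * y) < 1.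
Proof.
  intros Ht Hy; split; [nra|].
  split; apply Rdiv_in_01; nra.
Qed.

Lemma is_derive_five_term_defect y t : 0 < y < 1 -> 0 < t < 1 ->
  is_derive (five_term_defect y) t 0.
Proof.
  intros Hy Ht.
  destruct (five_term_args_range t y Ht Hy) as (H1 & H2 & H3).
  assert (0 < 1 - t * y) by nra.
  assert (HD : forall z, 0 < z < 1 -> Derive RogersL z = RogersL' z)
    by (intros z Hz; apply is_derive_unique, is_derive_RogersL, Hz).
  assert (HE : forall z, 0 < z < 1 -> ex_derive RogersL z)
    by (intros z Hz; eexists; apply is_derive_RogersL, Hz).
  unfold five_term_defect; auto_derive.
  - repeat split; try apply HE; assumption || lra.
  - change (fun z => RogersL z) with RogersL.
    change (t * (1 - y) * / (1 + - (t * y))) with (t * (1 - y) / (1 - t * y)).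
    change (y * (1 + - t) * / (1 + - (t * y))) with (y * (1 - t) / (1 - t * y)).
    rewrite (HD _ Ht), (HD _ H1), (HD _ H2), (HD _ H3).
    rewrite <- (RogersL'_five_term t y Ht Hy); field; lra.
Qed.

Lemma is_lim_seq_five_term_defect y u : 0 < y < 1 ->
  (forall n, 0 < u n < 1) -> is_lim_seq u 0 -> is_lim_seq (fun n => five_term_defect y (u n)) 0.
Proof.
  intros Hy Hu Hlim.
  assert (Hlim_0 : forall g : R -> R, ex_derive g 0 -> g 0 = 0 ->
      (forall t, 0 < t < 1 -> 0 < g t < 1) -> is_lim_seq (fun n => RogersL (g (u n))) 0).
  { intros g Hg Hg0 Hgr; apply is_lim_seq_RogersL_0; [intros n; apply Hgr, Hu|].
    rewrite <- Hg0; apply is_lim_seq_ex_derive_comp; assumption. }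
  replace 0 with (0 + RogersL y - 0 - 0 - RogersL y) by ring.
  apply is_lim_seq_minus'; [apply is_lim_seq_minus'; [apply is_lim_seq_minus';
    [apply is_lim_seq_plus'|]|]|].
  - apply (Hlim_0 (fun t => t)); [auto_derive | | ]; auto.
  - apply is_lim_seq_const.
  - apply (Hlim_0 (fun t => t * y)); [auto_derive | ring |]; auto.
    intros t Ht; apply (five_term_args_range t y Ht Hy).
  - apply (Hlim_0 (fun t => t * (1 - y) / (1 - t * y))); [auto_derive | field |]; try lra.
    intros t Ht; apply (five_term_args_range t y Ht Hy).
  - apply (is_lim_seq_ex_derive_comp RogersL); [eexists; apply is_derive_RogersL, Hy|].
    assert (Hg := is_lim_seq_ex_derive_comp (fun t => y * (1 - t) / (1 - t * y)) u 0
      ltac:(auto_derive; lra) Hlim).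
    cbv beta in Hg; replace (y * (1 - 0) / (1 - 0 * y)) with y in Hg by field; exact Hg.
Qed.

Lemma RogersL_five_term x y : 0 < x < 1 -> 0 < y < 1 ->
  RogersL x + RogersL y = RogersL (x * y) + RogersL (x * (1 - y) / (1 - x * y))
    + RogersL (y * (1 - x) / (1 - x * y)).
Proof.
  intros Hx Hy.
  enough (five_term_defect y x = 0) by (unfold five_term_defect in *; lra).
  assert (Hu : forall n, 0 < (/ 2) ^ S n < 1).
  { intros n; split; [apply pow_lt; lra | apply pow_lt_1_compat; [lra | lia]]. }
  assert (Hlim_x : is_lim_seq (fun n => five_term_defect y ((/ 2) ^ S n)) (five_term_defect y x)).
  { apply is_lim_seq_ext with (fun _ => five_term_defect y x); [|apply is_lim_seq_const].
    intros n; apply (derive_0_const _ 0 1); [|exact Hx | apply Hu].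
    intros t Ht; apply is_derive_five_term_defect; assumption. }
  assert (Hlim_0 := is_lim_seq_five_term_defect y _ Hy Hu is_lim_seq_half_pow).
  apply is_lim_seq_unique in Hlim_0, Hlim_x.
  rewrite Hlim_0 in Hlim_x; injection Hlim_x; lra.
Qed.

(** * The telescoping series *)

Section Telescoping.

Variable q : R.
Hypothesis Hq : 0 < q < 1.

Let xq (w : R) : R := w * (1 - q) / (1 - q * w).
Let yq (w : R) : R := (1 - q) / (1 - q * w).
Let Tq (w : R) : R := RogersL (xq w) + RogersL (yq w).

Let xq_yq_range w : 0 < w < 1 -> 0 < xq w < 1 /\ 0 < yq w < 1.
Proof.
  intros Hw; unfold xq, yq; split; apply Rdiv_in_01; nra.
Qed.

Let Tq_step w : 0 < w < 1 ->
  Tq w = RogersL (w * (1 - q) ^ 2 / (1 - q * w) ^ 2) + Tq (q * w).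
Proof.
  intros Hw; destruct (xq_yq_range w Hw) as [Hx Hy].
  assert (0 < 1 - q * w) by nra.
  assert (E : 1 - xq w * yq w = (1 - w) * (1 - q * (q * w)) / (1 - q * w) ^ 2)
    by (unfold xq, yq; field; lra).
  unfold Tq; rewrite (RogersL_five_term _ _ Hx Hy), E.
  replace (xq w * yq w) with (w * (1 - q) ^ 2 / (1 - q * w) ^ 2) by (unfold xq, yq; field; lra).
  replace (xq w * (1 - yq w) / ((1 - w) * (1 - q * (q * w)) / (1 - q * w) ^ 2)) with (xq (q * w))
    by (unfold xq, yq; field; repeat split; nra).
  replace (yq w * (1 - xq w) / ((1 - w) * (1 - q * (q * w)) / (1 - q * w) ^ 2)) with (yq (q * w))
    by (unfold xq, yq; field; repeat split; nra).
  ring.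
Qed.

Let q_pow_range m : 0 < q ^ S m < 1.
Proof. split; [apply pow_lt | apply pow_lt_1_compat; [| lia]]; lra. Qed.

Let Tq_partial_sum N :
  sum_f_R0 (fun j => RogersL (q ^ S j * (1 - q) ^ 2 / (1 - q ^ S (S j)) ^ 2)) N
  = Tq q - Tq (q ^ S (S N)).
Proof.
  induction N as [|N IH]; cbn [sum_f_R0].
  - rewrite (Tq_step q Hq); cbn [pow]; rewrite !Rmult_1_r; ring.
  - rewrite IH, (Tq_step _ (q_pow_range (S N))); change (q ^ S (S (S N))) with (q * q ^ S (S N)); ring.
Qed.

Let Tq_q : Tq q = RogersL q + RogersL (1 - q).
Proof.
  unfold Tq; destruct (xq_yq_range q Hq) as [Hx _].
  replace (yq q) with (1 - xq q) by (unfold xq, yq; field; nra).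
  apply RogersL_reflection; assumption.
Qed.

Let is_lim_seq_Tq : is_lim_seq (fun N => Tq (q ^ S (S N))) (RogersL (1 - q)).
Proof.
  assert (Hw : is_lim_seq (fun N => q ^ S (S N)) 0).
  { apply (is_lim_seq_incr_1 (fun N => q ^ S N)), (is_lim_seq_incr_1 (fun N => q ^ N)).
    apply is_lim_seq_geom; rewrite Rabs_right; lra. }
  assert (Hy0 : yq 0 = 1 - q) by (unfold yq; field).
  rewrite <- Hy0, <- (Rplus_0_l (RogersL (yq 0))).
  apply is_lim_seq_plus'.
  - apply is_lim_seq_RogersL_0; [intros N; apply xq_yq_range, q_pow_range|].
    replace 0 with (xq 0) by (unfold xq; field).
    apply is_lim_seq_ex_derive_comp; [unfold xq; auto_derive; lra | exact Hw].
  - apply (is_lim_seq_ex_derive_comp RogersL).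
    + eexists; apply is_derive_RogersL; rewrite Hy0; lra.
    + apply is_lim_seq_ex_derive_comp; [unfold yq; auto_derive; lra | exact Hw].
Qed.

Lemma RogersL_q_series :
  infinite_sum (fun j => RogersL (q ^ S j * (1 - q) ^ 2 / (1 - q ^ S (S j)) ^ 2)) (RogersL q).
Proof.
  apply is_lim_seq_Reals.
  apply is_lim_seq_ext with (fun N => Tq q - Tq (q ^ S (S N))).
  { intros N; symmetry; apply Tq_partial_sum. }
  replace (RogersL q) with (Tq q - RogersL (1 - q)) by (rewrite Tq_q; ring).
  apply is_lim_seq_minus'; [apply is_lim_seq_const | exact is_lim_seq_Tq].
Qed.

End Telescoping.

Lemma RogersL_unit_series v : 0 < v < 1 ->
  infinite_sum (fun j => RogersL (/ ((/ v ^ S (S j) - v ^ S (S j)) / (/ v - v)) ^ 2))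
    (RogersL (v ^ 2)).
Proof.
  intros Hv.
  assert (Hq : 0 < v ^ 2 < 1) by (split; nra).
  apply is_series_Reals; eapply is_series_ext; [|apply is_series_Reals, (RogersL_q_series _ Hq)].
  intros j; cbv beta; f_equal.
  assert (Hw : 0 < v ^ S j < 1) by (split; [apply pow_lt | apply pow_lt_1_compat; [| lia]]; lra).
  rewrite <- !pow_mult, !(Nat.mul_comm 2), !pow_mult.
  change (v ^ S (S j)) with (v * v ^ S j).
  field; repeat split; nra.
Qed.

(** * Powers of the Pell unit *)

Lemma Z_square_of_sqr_eq_mul_sqr (p d N : Z) :
  (0 < d)%Z -> (p * p = N * (d * d))%Z -> exists m, N = (m * m)%Z.
Proof.
  intros Hd E.
  set (g := Z.gcd p d).
  assert (Hg : g <> 0%Z) by (intros H0; apply Z.gcd_eq_0 in H0; lia).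
  destruct (Z.gcd_divide_l p d) as [p' Hp], (Z.gcd_divide_r p d) as [d' Hd'].
  fold g in Hp, Hd'.
  assert (Hcop : Z.gcd p' d' = 1%Z).
  { rewrite <- (Z.gcd_div_gcd p d g Hg eq_refl), Hp, Hd', !Z.div_mul by exact Hg.
    reflexivity. }
  assert (E' : (p' * p' = N * (d' * d'))%Z).
  { apply (Z.mul_reg_l _ _ (g * g)); [nia|].
    rewrite Hp, Hd' in E; lia. }
  assert (Hdiv : (d' | p')%Z).
  { apply Z.gauss with p'; [exists (N * d')%Z; lia | rewrite Z.gcd_comm; exact Hcop]. }
  assert (Hunit : (d' | 1)%Z) by (rewrite <- Hcop; apply Z.gcd_greatest; auto using Z.divide_refl).
  apply Z.divide_1_r in Hunit.
  exists p'; destruct Hunit; subst d'; lia.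
Qed.

Lemma Q2R_inject_Z_of_nat n : Q2R (inject_Z (Z.of_nat n)) = INR n.
Proof. unfold Q2R, inject_Z; simpl; rewrite INR_IZR_INZ; field. Qed.

Lemma sqrt_INR_irrational (n : nat) : ~ (exists m : nat, n = (m * m)%nat) ->
  forall x : Q, Q2R x <> sqrt (INR n).
Proof.
  intros Hn x Hx; apply Hn.
  assert (E : Q2R (x * x) = Q2R (inject_Z (Z.of_nat n))).
  { rewrite Q2R_mult, Hx, Q2R_inject_Z_of_nat; apply sqrt_sqrt, pos_INR. }
  apply eqR_Qeq in E; destruct x as [p d]; unfold Qeq, Qmult, inject_Z in E; simpl in E.
  destruct (Z_square_of_sqr_eq_mul_sqr p (Z.pos d) (Z.of_nat n)) as [m Hm]; [lia | lia |].
  exists (Z.abs_nat m); apply Nat2Z.inj.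
  rewrite Nat2Z.inj_mul, Nat2Z.inj_abs_nat, Hm; lia.
Qed.

Lemma sqrt_INR_coeff_unique (n : nat) (p1 r1 p2 r2 : Q) : ~ (exists m : nat, n = (m * m)%nat) ->
  Q2R p1 + Q2R r1 * sqrt (INR n) = Q2R p2 + Q2R r2 * sqrt (INR n) -> Q2R r1 = Q2R r2.
Proof.
  intros Hn E.
  destruct (Req_dec (Q2R r1) (Q2R r2)) as [|Hne]; [assumption | exfalso].
  assert (Hq : ~ (r1 - r2 == 0)%Q).
  { intros H0; apply Qeq_eqR in H0; rewrite Q2R_minus, RMicromega.Q2R_0 in H0; lra. }
  apply (sqrt_INR_irrational n Hn ((p2 - p1) / (r1 - r2))%Q).
  rewrite Q2R_div, !Q2R_minus by exact Hq.
  apply Rmult_eq_reg_r with (Q2R r1 - Q2R r2); [|lra].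
  unfold Rdiv; rewrite Rmult_assoc, Rinv_l by lra; lra.
Qed.

Fixpoint pell_coeffs (n : nat) (a b : Q) (k : nat) : Q * Q :=
  match k with
  | O => (1, 0)%Q
  | S k => ((a * fst (pell_coeffs n a b k)
             + inject_Z (Z.of_nat n) * b * b * snd (pell_coeffs n a b k))%Q,
            (fst (pell_coeffs n a b k) + a * snd (pell_coeffs n a b k))%Q)
  end.

Lemma pell_coeffs_pow (n : nat) (a b : Q) (k : nat) :
  let p := Q2R (fst (pell_coeffs n a b k)) in
  let r := Q2R (snd (pell_coeffs n a b k)) in
  (Q2R a + Q2R b * sqrt (INR n)) ^ k = p + Q2R b * r * sqrt (INR n) /\
  (Q2R a - Q2R b * sqrt (INR n)) ^ k = p - Q2R b * r * sqrt (INR n).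
Proof.
  assert (Hs : INR n = sqrt (INR n) * sqrt (INR n)) by (symmetry; apply sqrt_sqrt, pos_INR).
  set (s := sqrt (INR n)) in *.
  induction k as [|k [IH1 IH2]]; cbn [pow pell_coeffs fst snd].
  - rewrite RMicromega.Q2R_1, RMicromega.Q2R_0; split; ring.
  - rewrite IH1, IH2, !Q2R_plus, !Q2R_mult, Q2R_inject_Z_of_nat, Hs; split; ring.
Qed.

Lemma pell_coeffs_snd_coord (n : nat) (a b p r : Q) (k : nat) :
  ~ (exists m : nat, n = (m * m)%nat) -> 0 < Q2R b ->
  (Q2R a + Q2R b * sqrt (INR n)) ^ k = Q2R p + Q2R r * sqrt (INR n) ->
  Q2R r / Q2R b = Q2R (snd (pell_coeffs n a b k)).
Proof.
  intros Hsq Hb E; destruct (pell_coeffs_pow n a b k) as [Hpow _].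
  rewrite E, <- Q2R_mult in Hpow.
  rewrite (sqrt_INR_coeff_unique _ _ _ _ _ Hsq Hpow), Q2R_mult; field; lra.
Qed.

Lemma pell_coeffs_integral (n : nat) (a b : Q) (za zb : Z) :
  Q2R a = IZR za -> Q2R b = IZR zb -> forall k,
  (exists z, Q2R (fst (pell_coeffs n a b k)) = IZR z) /\
  (exists z, Q2R (snd (pell_coeffs n a b k)) = IZR z).
Proof.
  intros Ea Eb k; induction k as [|k [[p Hp] [r Hr]]]; cbn [pell_coeffs fst snd].
  - split; [exists 1%Z; apply RMicromega.Q2R_1 | exists 0%Z; apply RMicromega.Q2R_0].
  - rewrite !Q2R_plus, !Q2R_mult, Q2R_inject_Z_of_nat, Hp, Hr, Ea, Eb, INR_IZR_INZ; split.
    + exists (za * p + Z.of_nat n * zb * zb * r)%Z; rewrite plus_IZR, !mult_IZR; ring.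
    + exists (p + za * r)%Z; rewrite plus_IZR, !mult_IZR; ring.
Qed.

Lemma pell_conj_unit (a b s : R) : 0 < a -> 0 < b -> 0 < s -> a ^ 2 - s * s * b ^ 2 = 1 ->
  0 < a - b * s < 1 /\ a + b * s = / (a - b * s).
Proof.
  intros Ha Hb Hs E.
  assert (Hu : 1 < a + b * s) by nra.
  assert (Huv : (a + b * s) * (a - b * s) = 1) by nra.
  assert (Hv : 0 < a - b * s) by nra.
  split; [nra|].
  apply Rmult_eq_reg_r with (a - b * s); [rewrite Rinv_l; lra | lra].
Qed.

Theorem theorem3 (n : nat) (a b : Q) (A B : nat -> Q) :
  (2 <= n)%nat ->
  ~ (exists m : nat, n = (m * m)%nat) ->
  0 < Q2R a -> 0 < Q2R b ->
  Q2R a ^ 2 - INR n * Q2R b ^ 2 = 1 ->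
  (forall k : nat, (1 <= k)%nat ->
     (Q2R a + Q2R b * sqrt (INR n)) ^ k = Q2R (A k) + Q2R (B k) * sqrt (INR n)) ->
  infinite_sum
    (fun j : nat => RogersL (/ (Q2R (B (j + 2)%nat) / Q2R b) ^ 2))
    (RogersL (/ (Q2R a + Q2R b * sqrt (INR n)) ^ 2))
  /\
  ((exists za zb : Z, Q2R a = IZR za /\ Q2R b = IZR zb) ->
   forall k : nat, (1 <= k)%nat -> exists z : Z, Q2R (B k) / Q2R b = IZR z).
Proof.
  intros Hn Hsq Ha Hb Hpell HAB.
  set (r k := snd (pell_coeffs n a b k)).
  assert (HB : forall k, (1 <= k)%nat -> Q2R (B k) / Q2R b = Q2R (r k))
    by (intros k Hk; exact (pell_coeffs_snd_coord n a b (A k) (B k) k Hsq Hb (HAB k Hk))).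
  split.
  - assert (Hs : 0 < sqrt (INR n)) by (apply sqrt_lt_R0, (lt_INR 0); lia).
    destruct (pell_conj_unit (Q2R a) (Q2R b) (sqrt (INR n))) as [Hv Hu]; try assumption.
    { rewrite sqrt_sqrt by apply pos_INR; exact Hpell. }
    set (v := Q2R a - Q2R b * sqrt (INR n)) in *.
    assert (Hr : forall k, Q2R (r k) = (/ v ^ k - v ^ k) / (/ v - v)).
    { intros k; destruct (pell_coeffs_pow n a b k) as [Hu_k Hv_k].
      rewrite <- pow_inv, <- Hu, Hu_k; unfold v; rewrite Hv_k; unfold r.
      field; nra. }
    rewrite Hu, pow_inv, Rinv_inv.
    apply is_series_Reals; eapply is_series_ext; [|apply is_series_Reals, RogersL_unit_series, Hv].
    intros j; cbv beta; rewrite HB, Hr by lia.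
    replace (j + 2)%nat with (S (S j)) by lia; reflexivity.
  - intros [za [zb [Ea Eb]]] k Hk; rewrite HB by exact Hk.
    exact (proj2 (pell_coeffs_integral n a b za zb Ea Eb k)).
Qed.
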